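(* Let $\Gamma$ be a uniform layered graph with unique minimal vertex. Then $B(\Gamma)\cong(\operatorname{gr}A(\Gamma))^!$, the isomorphism being induced by $v^*\mapsto v$ for $v\in V_+$.
   Context: A layered graph is a finite directed graph $\Gamma=(V,E)$ with $V=\bigsqcup_{i=0}^{N}V_i$ such that every edge from $V_i$ goes to $V_{i-1}$; $V_+=\bigsqcup_{i\ge1}V_i$, $V_{\ge k}=\bigsqcup_{i\ge k}V_i$, $S(v)=\{w:(v,w)\in E\}$, nonempty for $v\in V_+$, $|V_0|=1$. $\Gamma$ is uniform if for every $v\in V_{\ge2}$ the elements of $S(v)$ form a single class under the transitive closure of $w\approx u$ iff $S(w)\cap S(u)\neq\emptyset$. For such $\Gamma$ one has $\operatorname{gr}A(\Gamma)\cong T(W)/\langle R\rangle$ with $W=\operatorname{span}V_+$ and $R=\operatorname{span}\{v\otimes(u-w): v\in V_{\ge2}, u,w\in S(v)\}\subseteq W\otimes W$. For a quadratic algebra $T(W)/\langle R\rangle$, its quadratic dual is $T(W^* )/\langle R^\perp\rangle$, where $R^\perp\subseteq W^*\otimes W^*$ is the set of elements annihilating $R$ under the pairing $\langle x\otimes y,v\otimes w\rangle=x(v)y(w)$; $\{v^*\}$ is the dual basis to $V_+$. $B(\Gamma)=T(V_+)/R_B$ over a field $\mathbb F$, where $R_B$ is the two-sided ideal generated by $\{vw: v,w\in V_+,(v,w)\notin E\}\cup\{v\sum_{w\in S(v)}w: v\in V_{\ge2}\}$. *)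

From HB Require Import structures.
From mathcomp Require Import all_boot all_order all_algebra.
Set Implicit Arguments. Unset Strict Implicit. Unset Printing Implicit Defensive.
Import GRing.Theory.
Local Open Scope ring_scope.

(* Free associative algebra T(X) over a field F on a finite alphabet X *)
(* An element is a formal finite sum  sum_i c_i * w_i  of words w_i,   *)
(* represented by a list of (coefficient, word) pairs; two such lists  *)
(* denote the same element iff they have the same coefficient on every *)
(* word (nceq).                                                        *)
Section FreeAlgebra.
Variables (F : fieldType) (X : finType).

Definition ncpoly := seq (F * seq X).

Definition nccoef (p : ncpoly) (w : seq X) : F :=
  \sum_(t <- p) (if t.2 == w then t.1 else 0).

Definition nceq (p q : ncpoly) : Prop := forall w, nccoef p w = nccoef q w.

Definition ncmul (p q : ncpoly) : ncpoly :=
  [seq (s.1 * t.1, s.2 ++ t.2) | s <- p, t <- q].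

Definition ncmon (w : seq X) : ncpoly := [:: (1, w)].

Definition in_ideal (S : ncpoly -> Prop) (f : ncpoly) : Prop :=
  exists l : seq (ncpoly * ncpoly * ncpoly),
    (forall t, t \in l -> S t.1.2) /\
    nceq f (flatten [seq ncmul (ncmul t.1.1 t.1.2) t.2 | t <- l]).

(* Elements of X (x) X (or of X* (x) X*, coordinates in the dual basis)
   are coefficient functions X -> X -> F; phi2 c is the corresponding
   degree-2 element  sum_{x,y} c x y * x y  of T(X). *)
Definition phi2 (c : X -> X -> F) : ncpoly :=
  [seq (c x y, [:: x; y]) | x <- enum X, y <- enum X].

End FreeAlgebra.

(* V finite vertex type, lvl v = i iff v \in V_i, E the edge relation. *)
Definition layered (V : finType) (lvl : V -> nat) (E : rel V) : Prop :=
  (forall v w, E v w -> (0 < lvl v)%N /\ lvl w = (lvl v).-1) /\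
  (forall v, (0 < lvl v)%N -> exists w, E v w) /\
  #|[pred v | lvl v == 0%N]| = 1%N.

Definition simrel (V : finType) (E : rel V) (v : V) : rel V :=
  fun w u => [&& E v w, E v u & [exists x, E w x && E u x]].

Definition uniform (V : finType) (lvl : V -> nat) (E : rel V) : Prop :=
  forall v, (1 < lvl v)%N ->
    forall u w, E v u -> E v w -> connect (simrel E v) u w.

Definition Vp (V : finType) (lvl : V -> nat) : finType :=
  {v : V | (0 < lvl v)%N}.

Section Algebras.
Variables (F : fieldType) (V : finType) (lvl : V -> nat) (E : rel V).
Local Notation X := (Vp lvl).

(* generator v (x) (u - w) of R, as coefficient function on V_+ x V_+ *)
Definition Rgen (t : X * X * X) : X -> X -> F :=
  fun x y => (x == t.1.1)%:R * ((y == t.1.2)%:R - (y == t.2)%:R).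

Definition Rgen_ok (t : X * X * X) : bool :=
  [&& (1 < lvl (val t.1.1))%N, E (val t.1.1) (val t.1.2) & E (val t.1.1) (val t.2)].

Definition in_R (r : X -> X -> F) : Prop :=
  exists l : seq (F * (X * X * X)),
    (forall t, t \in l -> Rgen_ok t.2) /\
    forall x y, r x y = \sum_(t <- l) t.1 * Rgen t.2 x y.

(* R^perp in W* (x) W*, for the pairing <x*(x)y*, v(x)w> = x*(v) y*(w) *)
Definition in_Rperp (c : X -> X -> F) : Prop :=
  forall r, in_R r -> \sum_(x : X) \sum_(y : X) c x y * r x y = 0.

(* Generators of <R^perp>, transported to T(V_+) along v^* |-> v. *)
Definition dual_gens (p : ncpoly F X) : Prop :=
  exists c, in_Rperp c /\ p = phi2 c.

Definition B_gens (p : ncpoly F X) : Prop :=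
  (exists v w : X, ~~ E (val v) (val w) /\ p = ncmon F [:: v; w]) \/
  (exists v : X, (1 < lvl (val v))%N /\
     p = [seq (1, [:: v; w]) | w <- enum X & E (val v) (val w)]).

End Algebras.

From HB Require Import structures.
From mathcomp Require Import all_boot all_order all_algebra.
Set Implicit Arguments. Unset Strict Implicit. Unset Printing Implicit Defensive.
Import GRing.Theory.
Local Open Scope ring_scope.

(* Transported along v^* |-> v, both sides are quotients of T(V_+) by ideals
   generated in degree 2, so it suffices that each family of generators lies
   in the ideal of the other.  Hence the
      generators of R_B lie in R^perp, and conversely every c in R^perp is a
      combination of the non-edge monomials xy and of the sums
      v * sum_{w in S(v)} w, because every edge inside V_+ starts in V_{>=2}. *)

Section FreeAlgebra.
Variables (F : fieldType) (X : finType).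
Implicit Types (p q r : ncpoly F X) (w : seq X).

Lemma nceq_refl p : nceq p p. Proof. by []. Qed.

Lemma nceq_sym p q : nceq p q -> nceq q p. Proof. by move=> H w. Qed.

Lemma nceq_trans p q r : nceq p q -> nceq q r -> nceq p r.
Proof. by move=> Hpq Hqr w; rewrite Hpq Hqr. Qed.

Lemma coef_nil w : nccoef [::] w = 0 :> F.
Proof. by rewrite /nccoef big_nil. Qed.

Lemma coef_cat p q w : nccoef (p ++ q) w = nccoef p w + nccoef q w.
Proof. by rewrite /nccoef big_cat. Qed.

Lemma coef_mon u w : nccoef (ncmon F u) w = (u == w)%:R.
Proof. by rewrite /nccoef big_cons big_nil addr0 /=; case: eqP. Qed.

Lemma cat_congr p p' q q' : nceq p p' -> nceq q q' -> nceq (p ++ q) (p' ++ q').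
Proof. by move=> Hp Hq w; rewrite !coef_cat Hp Hq. Qed.

Lemma coef_mul_pairs p q w : nccoef (ncmul p q) w =
  \sum_(s <- p) \sum_(t <- q) (if s.2 ++ t.2 == w then s.1 * t.1 else 0).
Proof. by rewrite /nccoef /ncmul big_allpairs_dep. Qed.

(* A word a ++ b equals w exactly for the cut of w at position size a. *)
Lemma cat_eq_cuts (a b w : seq X) (k : F) :
  (if a ++ b == w then k else 0) =
  \sum_(i < (size w).+1) (if (take i w == a) && (drop i w == b) then k else 0).
Proof.
case: eqP => [<-|ne].
  have Hs : (size a < (size (a ++ b)).+1)%N by rewrite size_cat ltnS leq_addr.
  rewrite (bigD1 (Ordinal Hs)) //= take_size_cat // drop_size_cat // !eqxx /=.
  rewrite big1 ?addr0 // => i ne_i.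
  case: andP => [[/eqP ta _]|] //.
  have : size (take i (a ++ b)) = i by rewrite size_takel // -ltnS ltn_ord.
  rewrite ta => si; case/negP: ne_i; apply/eqP/val_inj => /=; by rewrite si.
rewrite big1 // => i _; case: andP => [[/eqP ta /eqP db]|//].
by case: ne; rewrite -ta -db cat_take_drop.
Qed.

Lemma coef_mul p q w : nccoef (ncmul p q) w =
  \sum_(i < (size w).+1) nccoef p (take i w) * nccoef q (drop i w).
Proof.
rewrite coef_mul_pairs.
under eq_bigr do rewrite (eq_bigr _ (fun t _ => cat_eq_cuts _ _ _ _)) exchange_big /=.
rewrite exchange_big /=; apply: eq_bigr => i _.
rewrite /nccoef big_distrl /=; apply: eq_bigr => s _.
rewrite big_distrr /=; apply: eq_bigr => t _.
rewrite [s.2 == _]eq_sym [t.2 == _]eq_sym.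
by do 2 case: eqP => _ /=; rewrite ?mulr0 ?mul0r.
Qed.

Lemma ncmul_congr p p' q q' : nceq p p' -> nceq q q' -> nceq (ncmul p q) (ncmul p' q').
Proof. by move=> Hp Hq w; rewrite !coef_mul; apply: eq_bigr => i _; rewrite Hp Hq. Qed.

Lemma ncmulDl p1 p2 q : nceq (ncmul (p1 ++ p2) q) (ncmul p1 q ++ ncmul p2 q).
Proof.
move=> w; rewrite coef_cat !coef_mul -big_split.
by apply: eq_bigr => i _; rewrite coef_cat mulrDl.
Qed.

Lemma ncmulDr p q1 q2 : nceq (ncmul p (q1 ++ q2)) (ncmul p q1 ++ ncmul p q2).
Proof.
move=> w; rewrite coef_cat !coef_mul -big_split.
by apply: eq_bigr => i _; rewrite coef_cat mulrDr.
Qed.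

Lemma ncmul0r p : nceq (ncmul p [::]) [::].
Proof. by move=> w; rewrite coef_mul coef_nil big1 // => i _; rewrite coef_nil mulr0. Qed.

Lemma ncmulA p q r : nceq (ncmul (ncmul p q) r) (ncmul p (ncmul q r)).
Proof.
move=> w; rewrite !coef_mul_pairs /ncmul big_allpairs_dep /=.
apply: eq_bigr => s _; rewrite big_allpairs_dep /=.
by apply: eq_bigr => t _; apply: eq_bigr => u _; rewrite catA mulrA.
Qed.

Lemma ncmul1l p : nceq (ncmul (ncmon F [::]) p) p.
Proof.
move=> w; rewrite coef_mul_pairs big_cons big_nil addr0 /=.
by apply: eq_bigr => t _; rewrite mul1r.
Qed.

Lemma ncmul1r p : nceq (ncmul p (ncmon F [::])) p.
Proof.
move=> w; rewrite coef_mul_pairs; apply: eq_bigr => t _.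
by rewrite big_cons big_nil addr0 /= cats0 mulr1.
Qed.

Lemma coef_scale a p w : nccoef (ncmul [:: (a, [::])] p) w = a * nccoef p w.
Proof.
rewrite coef_mul_pairs big_cons big_nil addr0 /= /nccoef mulr_sumr.
by apply: eq_bigr => t _; case: ifP; rewrite ?mulr0.
Qed.

Definition ideal_comb (l : seq (ncpoly F X * ncpoly F X * ncpoly F X)) : ncpoly F X :=
  flatten [seq ncmul (ncmul t.1.1 t.1.2) t.2 | t <- l].

Lemma ideal_comb_cons t l :
  ideal_comb (t :: l) = ncmul (ncmul t.1.1 t.1.2) t.2 ++ ideal_comb l.
Proof. by []. Qed.

Lemma ideal_comb_mul a b l :
  nceq (ncmul (ncmul a (ideal_comb l)) b)
       (ideal_comb [seq (ncmul a t.1.1, t.1.2, ncmul t.2 b) | t <- l]).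
Proof.
elim: l => [|[[x s] y] l IH]; first exact: ncmul_congr (ncmul0r a) (nceq_refl b).
rewrite ideal_comb_cons /= ideal_comb_cons.
apply: nceq_trans (ncmul_congr (ncmulDr _ _ _) (nceq_refl b)) _.
apply: nceq_trans (ncmulDl _ _ _) _; apply: cat_congr => //=.
apply: nceq_trans (ncmul_congr (nceq_sym (ncmulA _ _ _)) (nceq_refl b)) _.
apply: nceq_trans (ncmulA _ _ _) _.
exact: ncmul_congr (nceq_sym (ncmulA _ _ _)) (nceq_refl _).
Qed.

Section Ideal.
Variable S : ncpoly F X -> Prop.

Lemma ideal_nceq f g : nceq f g -> in_ideal S g -> in_ideal S f.
Proof. by move=> Hfg [l [Hl Hg]]; exists l; split => //; apply: nceq_trans Hg. Qed.

Lemma ideal_nil : in_ideal S [::].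
Proof. by exists [::]. Qed.

Lemma ideal_cat f g : in_ideal S f -> in_ideal S g -> in_ideal S (f ++ g).
Proof.
move=> [l1 [H1 E1]] [l2 [H2 E2]]; exists (l1 ++ l2); split.
  by move=> t; rewrite mem_cat => /orP [] ?; [apply: H1|apply: H2].
by rewrite /ideal_comb map_cat flatten_cat; apply: cat_congr.
Qed.

Lemma ideal_gen g : S g -> in_ideal S g.
Proof.
move=> Sg; exists [:: (ncmon F [::], g, ncmon F [::])]; split.
  by move=> t; rewrite inE => /eqP ->.
rewrite -/(ideal_comb _) ideal_comb_cons /= cats0.
exact: nceq_sym (nceq_trans (ncmul1r _) (ncmul1l _)).
Qed.

Lemma ideal_mul a b f : in_ideal S f -> in_ideal S (ncmul (ncmul a f) b).
Proof.
move=> [l [Hl Ef]]; exists [seq (ncmul a t.1.1, t.1.2, ncmul t.2 b) | t <- l]; split.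
  by move=> t /mapP [u ul ->] /=; apply: Hl.
apply: nceq_trans (ideal_comb_mul a b l).
exact: ncmul_congr (ncmul_congr (nceq_refl _) Ef) (nceq_refl _).
Qed.

Lemma ideal_scale a f : in_ideal S f -> in_ideal S (ncmul [:: (a, [::])] f).
Proof.
move=> Sf; apply: ideal_nceq (ideal_mul _ (ncmon F [::]) Sf).
exact: nceq_sym (ncmul1r _).
Qed.

End Ideal.

Lemma ideal_sub (S1 S2 : ncpoly F X -> Prop) :
  (forall g, S1 g -> in_ideal S2 g) -> forall f, in_ideal S1 f -> in_ideal S2 f.
Proof.
move=> H f [l [Hl Ef]]; apply: ideal_nceq Ef _; rewrite -/(ideal_comb l).
elim: l Hl => [|t l IH] Hl; first exact: ideal_nil.
rewrite ideal_comb_cons; apply: ideal_cat.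
  by apply: ideal_mul; apply: H; apply: Hl; rewrite inE eqxx.
by apply: IH => u ul; apply: Hl; rewrite inE ul orbT.
Qed.

End FreeAlgebra.

Lemma sum_delta (F : fieldType) (I : finType) (P : pred I) (f : I -> F) (i0 : I) :
  \sum_(i | P i) f i * (i == i0)%:R = if P i0 then f i0 else 0.
Proof.
rewrite big_mkcond (bigD1 i0) //= eqxx mulr1 big1 ?addr0; first by case: ifP.
by move=> i /negbTE ne; rewrite ne mulr0; case: ifP.
Qed.

Section Quadratic.
Variables (F : fieldType) (X : finType).
Implicit Types (c d : X -> X -> F).

Lemma coef_phi2 c w :
  nccoef (phi2 c) w = if w is [:: x; y] then c x y else 0.
Proof.
rewrite /nccoef /phi2 big_allpairs_dep /=.
case: w => [|x0 [|y0 [|z w]]].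
- by rewrite big1 // => x _; rewrite big1 // => y _.
- by rewrite big1 // => x _; rewrite big1 // => y _; case: eqP => // /(congr1 size).
- have inner x : \sum_(y <- enum X) (if [:: x; y] == [:: x0; y0] then c x y else 0)
      = if x == x0 then c x y0 else 0.
    rewrite (bigD1_seq y0) ?mem_enum ?enum_uniq //= big1_seq ?addr0.
      by rewrite !eqseq_cons eqxx andbT.
    by move=> y /andP [ne _]; rewrite !eqseq_cons (negbTE ne) andbF.
  under eq_bigr do rewrite inner.
  rewrite (bigD1_seq x0) ?mem_enum ?enum_uniq //= eqxx big1_seq ?addr0 //.
  by move=> y /andP [ne _]; rewrite (negbTE ne).
- by rewrite big1 // => x _; rewrite big1 // => y _; case: eqP => // /(congr1 size) /eqP.
Qed.

Lemma phi2_ext c d : (forall x y, c x y = d x y) -> nceq (phi2 c) (phi2 d).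
Proof. by move=> H w; rewrite !coef_phi2; case: w => [|x [|y []]]. Qed.

Lemma phi2_add c d : nceq (phi2 (fun x y => c x y + d x y)) (phi2 c ++ phi2 d).
Proof. by move=> w; rewrite coef_cat !coef_phi2; case: w => [|x [|y []]]; rewrite ?addr0. Qed.

Lemma phi2_scale a c : nceq (phi2 (fun x y => a * c x y)) (ncmul [:: (a, [::])] (phi2 c)).
Proof. by move=> w; rewrite coef_scale !coef_phi2; case: w => [|x [|y []]]; rewrite ?mulr0. Qed.

Lemma ideal_phi2_span (S : ncpoly F X -> Prop) (I : finType) (P : pred I)
    (a : I -> F) (g : I -> X -> X -> F) :
  (forall i, P i -> in_ideal S (phi2 (g i))) ->
  in_ideal S (phi2 (fun x y => \sum_(i | P i) a i * g i x y)).
Proof.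
move=> Sg; elim: (index_enum I) => [|i s IH].
  apply: ideal_nceq (ideal_nil S) => w; rewrite coef_phi2 coef_nil.
  by case: w => [|x [|y []]] //; rewrite big_nil.
have cons_split : nceq (phi2 (fun x y => \sum_(j <- i :: s | P j) a j * g j x y))
  ((if P i then phi2 (fun x y => a i * g i x y) else [::]) ++
   phi2 (fun x y => \sum_(j <- s | P j) a j * g j x y)).
  move=> w; rewrite coef_cat !coef_phi2.
  by case Pi: (P i); rewrite ?coef_phi2 ?coef_nil; case: w => [|x [|y [|? ?]]];
    rewrite ?big_cons ?Pi ?addr0 ?add0r.
apply: ideal_nceq cons_split (ideal_cat _ IH).
case Pi: (P i); last exact: ideal_nil.
exact: ideal_nceq (phi2_scale _ _) (ideal_scale _ (Sg _ Pi)).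
Qed.

End Quadratic.

Section LayeredGraph.
Variables (F : fieldType) (V : finType) (lvl : V -> nat) (E : rel V).
Local Notation X := (Vp lvl).
Implicit Types (c : X -> X -> F).

Lemma edge_source_level (x y : X) :
  layered lvl E -> E (val x) (val y) -> (1 < lvl (val x))%N.
Proof.
move=> [edge_lvl _] exy; have [x_pos y_lvl] := edge_lvl _ _ exy.
by have := valP y; rewrite /= y_lvl; case: (lvl (val x)) x_pos => [|[]].
Qed.

(* Coefficient functions of the monomial p.1 p.2 and of v * sum_{w in S(v)} w. *)
Definition delta2 (p : X * X) : X -> X -> F := fun x y => (p == (x, y))%:R.

Definition out_sum (v : X) : X -> X -> F :=
  fun x y => (E (val v) (val y))%:R * (v == x)%:R.

Lemma phi2_delta2 (p : X * X) : nceq (phi2 (delta2 p)) (ncmon F [:: p.1; p.2]).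
Proof.
case: p => a b w; rewrite coef_phi2 coef_mon.
by case: w => [|x [|y [|? ?]]]; rewrite /delta2 ?xpair_eqE ?eqseq_cons ?andbT ?andbF.
Qed.

Lemma phi2_out_sum (v : X) :
  nceq (phi2 (out_sum v)) [seq (1, [:: v; w]) | w <- enum X & E (val v) (val w)].
Proof.
move=> w; rewrite coef_phi2 /nccoef big_map big_filter /=.
case: w => [|x0 [|y0 [|z w]]].
- by rewrite big1 // => y _; case: eqP => // /(congr1 size).
- by rewrite big1 // => y _; case: eqP => // /(congr1 size).
- rewrite big_mkcond /= (bigD1_seq y0) ?mem_enum ?enum_uniq //= big1_seq ?addr0; last first.
    by move=> y /andP [ne _]; rewrite !eqseq_cons (negbTE ne) andbF; case: ifP.
  rewrite !eqseq_cons eqxx andbT /out_sum.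
  by case: (v == x0); case: (E _ _); rewrite ?mulr1 ?mulr0.
- by rewrite big1 // => y _; case: eqP => // /(congr1 size) /eqP.
Qed.

Lemma pairing_Rgen c (t : X * X * X) :
  \sum_x \sum_y c x y * Rgen F t x y = c t.1.1 t.1.2 - c t.1.1 t.2.
Proof.
transitivity (\sum_x (\sum_y c x y * ((y == t.1.2)%:R - (y == t.2)%:R)) * (x == t.1.1)%:R).
  apply: eq_bigr => x _; rewrite mulr_suml; apply: eq_bigr => y _.
  by rewrite /Rgen mulrCA mulrC.
rewrite sum_delta; under eq_bigr do rewrite mulrBr.
by rewrite sumrB !sum_delta.
Qed.

Lemma in_RperpP c :
  in_Rperp E c <-> forall v u w : X, (1 < lvl (val v))%N ->
    E (val v) (val u) -> E (val v) (val w) -> c v u = c v w.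
Proof.
split=> [Hc v u w lvl_v evu evw | Hc r [l [Hl Hr]]].
  apply/eqP; rewrite -subr_eq0 -(pairing_Rgen c (v, u, w)); apply/eqP/Hc.
  exists [:: (1, (v, u, w))]; split; last by move=> x y; rewrite big_cons big_nil addr0 mul1r.
  by move=> t; rewrite inE => /eqP -> /=; rewrite /Rgen_ok /= lvl_v evu evw.
under eq_bigr => x _ do under eq_bigr => y _ do rewrite Hr mulr_sumr.
under eq_bigr => x _ do rewrite exchange_big /=.
rewrite exchange_big /=; apply: big1_seq => -[a [[v u] w]] /andP [_ /Hl /and3P [lvl_v evu evw]].
transitivity (a * \sum_x \sum_y c x y * Rgen F (v, u, w) x y).
  rewrite mulr_sumr; apply: eq_bigr => x _; rewrite mulr_sumr; apply: eq_bigr => y _.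
  by rewrite mulrCA.
by rewrite pairing_Rgen /= (Hc v u w) ?subrr ?mulr0.
Qed.

Lemma B_gens_in_dual_ideal (g : ncpoly F X) :
  @B_gens F V lvl E g -> in_ideal (@dual_gens F V lvl E) g.
Proof.
case=> [[v [w [not_vw ->]]] | [v [lvl_v ->]]].
- apply: ideal_nceq (nceq_sym (phi2_delta2 (v, w))) (ideal_gen _).
  exists (delta2 (v, w)); split => //; apply/in_RperpP => x u u' _ exu exu'.
  have w_notin z : E (val v) (val z) -> (w == z) = false.
    by move=> evz; apply: contraNF not_vw => /eqP ->.
  rewrite /delta2 !xpair_eqE; move: exu exu'.
  by case: (eqVneq x v) => [->|//] evu evu'; rewrite /= !w_notin.
- apply: ideal_nceq (nceq_sym (phi2_out_sum v)) (ideal_gen _).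
  exists (out_sum v); split => //; apply/in_RperpP => x u u' _ exu exu'.
  rewrite /out_sum; move: exu exu'.
  by case: (eqVneq x v) => [->|_] evu evu'; rewrite ?evu ?evu' ?mulr0.
Qed.

Lemma dual_gens_in_B_ideal (g : ncpoly F X) :
  layered lvl E -> @dual_gens F V lvl E g -> in_ideal (@B_gens F V lvl E) g.
Proof.
move=> lay [c [/in_RperpP c_const ->]].
pose out_coef (v : X) := if [pick y | E (val v) (val y)] is Some y then c v y else 0.
have decomp x y : c x y =
    \sum_(p : X * X | ~~ E (val p.1) (val p.2)) c p.1 p.2 * delta2 p x y +
    \sum_(v | (1 < lvl (val v))%N) out_coef v * out_sum v x y.
  rewrite sum_delta; under eq_bigr do rewrite mulrA; rewrite sum_delta /=.
  case exy: (E (val x) (val y)); last by case: ifP; rewrite ?mulr0 addr0.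
  have lvl_x := edge_source_level lay exy.
  rewrite lvl_x mulr1 add0r /out_coef.
  case: pickP => [y' exy'|none]; first exact: c_const lvl_x exy exy'.
  by have := none y; rewrite exy.
apply: ideal_nceq (phi2_ext decomp) _; apply: ideal_nceq (phi2_add _ _) _.
apply: ideal_cat; apply: ideal_phi2_span.
- move=> p not_edge; apply: ideal_nceq (phi2_delta2 p) (ideal_gen _).
  by left; exists p.1, p.2.
- move=> v lvl_v; apply: ideal_nceq (phi2_out_sum v) (ideal_gen _).
  by right; exists v.
Qed.

End LayeredGraph.

(* Uniformity is what makes gr A(Gamma) quadratic with relations R; the
   identification of the two ideals itself only uses that Gamma is layered. *)
Theorem mainTheorem7 (F : fieldType) (V : finType) (lvl : V -> nat) (E : rel V) :
  layered lvl E -> uniform lvl E ->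
  forall p : ncpoly F (Vp lvl),
    in_ideal (@B_gens F V lvl E) p <-> in_ideal (@dual_gens F V lvl E) p.
Proof.
move=> lay _ p; split; apply: ideal_sub => g.
- exact: B_gens_in_dual_ideal.
- exact: dual_gens_in_B_ideal.
Qed.
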